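(* Let $\tau\in\mathscr C^r(\mathbb{S}^1,\mathbb{R})$ and $R>\|\tau'\|_\infty$. For all integers $n,m\ge1$, $\mathcal N(\tau,R;n+m)\le\mathcal N(\tau,R'_m;n)\cdot\mathcal N(\tau,R;m)\le\mathcal N(\tau,R;n)\cdot\mathcal N(\tau,R;m)$, where $R'_m=\|\tau'\|_\infty+\lambda^{-m}(R-\|\tau'\|_\infty)$. Consequently $\lim_{n\to\infty}\mathcal N(\tau,R;n)^{1/n}$ exists, equals $\inf_n\mathcal N(\tau,R;n)^{1/n}$, and is independent of the choice of $R>\|\tau'\|_\infty$.
   Context: Let $\mathbb{S}^1=\mathbb{R}/\mathbb{Z}$, $\mathbb{T}^2=\mathbb{S}^1\times\mathbb{S}^1$, $r\ge2$. Let $E:\mathbb{S}^1\to\mathbb{S}^1$ be a $\mathscr C^r$ expanding map of degree $\ell\ge2$ with $1<\lambda\le E'(x)\le\Lambda$ for all $x$. For $\tau\in\mathscr C^r(\mathbb{S}^1,\mathbb{R})$ let $f(x,s)=(E(x),s+\tau(x)\bmod1)$ on $\mathbb{T}^2$. For $R>0$ set $\vartheta_R=R/(\lambda-1)$ and $\mathscr K_R=\{(\xi,\eta)\in\mathbb{R}^2:|\eta|\le\vartheta_R|\xi|\}$. For $R>\|\tau'\|_\infty$ and $n\ge1$, $\mathcal N(\tau,R;n)=\sup_{z\in\mathbb{T}^2}\sup_{v}\#\{\zeta\in f^{-n}(z): v\in Df^n(\zeta)\mathscr K_R\}$, $\sup_v$ over unit vectors $v\in\mathbb{R}^2$. *)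

From Stdlib Require Import Reals Lra Lia List ClassicalEpsilon.
Import ListNotations.
Open Scope R_scope.

Definition Cr (r : nat) (f : R -> R) : Prop :=
  exists d : nat -> R -> R,
    d O = f /\
    (forall k x, (k < r)%nat -> derivable_pt_lim (d k) x (d (S k) x)) /\
    (forall x, continuity_pt (d r) x).

Definition is_int (a : R) : Prop := exists k : Z, a = IZR k.

(* Lift of the skew product f(x,s) = (E x, s + tau x) to R^2. *)
Definition skew (E tau : R -> R) (p : R * R) : R * R :=
  (E (fst p), snd p + tau (fst p)).

Fixpoint skew_iter (E tau : R -> R) (n : nat) (p : R * R) : R * R :=
  match n with
  | O => p
  | S k => skew E tau (skew_iter E tau k p)
  end.

Record mat2 := Mat2 { m11 : R; m12 : R; m21 : R; m22 : R }.

Definition mat_mul (A B : mat2) : mat2 :=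
  Mat2 (m11 A * m11 B + m12 A * m21 B) (m11 A * m12 B + m12 A * m22 B)
       (m21 A * m11 B + m22 A * m21 B) (m21 A * m12 B + m22 A * m22 B).

Definition mat_app (A : mat2) (w : R * R) : R * R :=
  (m11 A * fst w + m12 A * snd w, m21 A * fst w + m22 A * snd w).

Definition Dskew (dE dtau : R -> R) (p : R * R) : mat2 :=
  Mat2 (dE (fst p)) 0 (dtau (fst p)) 1.

Fixpoint Dskew_iter (E tau dE dtau : R -> R) (n : nat) (p : R * R) : mat2 :=
  match n with
  | O => Mat2 1 0 0 1
  | S k => mat_mul (Dskew dE dtau (skew_iter E tau k p))
                   (Dskew_iter E tau dE dtau k p)
  end.

Definition theta (lam Rc : R) : R := Rc / (lam - 1).
Definition in_cone (lam Rc : R) (w : R * R) : Prop :=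
  Rabs (snd w) <= theta lam Rc * Rabs (fst w).

(* zeta is (the canonical representative in [0,1)^2 of) a point of
   f^{-n}(z) on T^2 *)
Definition preimage (E tau : R -> R) (n : nat) (z zeta : R * R) : Prop :=
  0 <= fst zeta < 1 /\ 0 <= snd zeta < 1 /\
  is_int (fst (skew_iter E tau n zeta) - fst z) /\
  is_int (snd (skew_iter E tau n zeta) - snd z).

Definition good_preimage (E tau dE dtau : R -> R) (lam Rc : R) (n : nat)
  (z v zeta : R * R) : Prop :=
  preimage E tau n z zeta /\
  exists w, in_cone lam Rc w /\ mat_app (Dskew_iter E tau dE dtau n zeta) w = v.

Definition has_card (P : R * R -> Prop) (k : nat) : Prop :=
  exists l : list (R * R), NoDup l /\ (forall x, In x l <-> P x) /\ length l = k.

Definition N_values (E tau dE dtau : R -> R) (lam Rc : R) (n : nat) (y : R) : Prop :=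
  exists (z v : R * R) (k : nat),
    fst v * fst v + snd v * snd v = 1 /\
    has_card (good_preimage E tau dE dtau lam Rc n z v) k /\ y = INR k.

Definition Ncal (E tau dE dtau : R -> R) (lam Rc : R) (n : nat) : R :=
  epsilon (inhabits 0) (fun s => is_lub (N_values E tau dE dtau lam Rc n) s).

Definition is_glb (P : R -> Prop) (m : R) : Prop :=
  (forall y, P y -> m <= y) /\ (forall b, (forall y, P y -> b <= y) -> b <= m).

(* Cut a preimage [zeta] of [z] under [f^(n+m)] at [f^m zeta]: reduced mod 1 this is a
   preimage of [z] under [f^n], and [zeta] is a preimage of it under [f^m].  Since
   [Df^m] maps [K_R] into the thinner cone [K_(R'_m)], the intermediate points are good
   preimages for [(tau, R'_m; n)], and over each of them the good [zeta] share one
   direction [Df^m(zeta) w] (the matrices are lower triangular), hence are at most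
   [N(tau, R; m)] in number.  This gives submultiplicativity, and Fekete's lemma applied to
   [0 <= ln N(tau, R; n) <= n ln ell] gives the limit and the infimum.  As [R'_m] tends to
   [|tau'|_oo], for any two radii [R1, R2] some [m] has [R2'_m <= R1], so
   [N(tau, R2; n + m) <= N(tau, R1; n) ell^m] and the two limits agree. *)

From Stdlib Require Import Reals Lra Lia List ClassicalEpsilon Classical.
Import ListNotations.
Open Scope R_scope.

Lemma ln_le_ln x y : 0 < x -> x <= y -> ln x <= ln y.
Proof.
  intros Hx [Hxy | <-]; [left; apply ln_increasing; assumption | right; reflexivity].
Qed.

Lemma div_succ_eventually_lt c eps : 0 < eps ->
  exists N, forall n, (N <= n)%nat -> c / INR (S n) < eps.
Proof.
  intros Heps.
  assert (Hc1 : 0 < Rabs c + 1) by (pose proof (Rabs_pos c); lra).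
  destruct (archimed_cor1 (eps / (Rabs c + 1))) as [N [HN HN0]].
  { apply Rdiv_lt_0_compat; assumption. }
  exists N. intros n Hn.
  assert (HNpos : 0 < INR N) by (apply lt_0_INR; lia).
  assert (Hinv : / INR (S n) <= / INR N)
    by (apply Rinv_le_contravar; [exact HNpos | apply le_INR; lia]).
  assert (Hinv0 : 0 < / INR (S n)) by (apply Rinv_0_lt_compat, lt_0_INR; lia).
  assert (HcN : (Rabs c + 1) * / INR N < eps).
  { apply Rmult_lt_compat_l with (r := Rabs c + 1) in HN; [|lra].
    replace ((Rabs c + 1) * (eps / (Rabs c + 1))) with eps in HN by (field; lra). exact HN. }
  pose proof (Rle_abs c). pose proof (Rabs_pos c).
  unfold Rdiv. nra.
Qed.

Lemma le_lim_of_le_plus_div (u : nat -> R) L1 L2 K :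
  Un_cv (fun k => u (S k)) L1 ->
  (forall n, (1 <= n)%nat -> L2 <= u n + K / INR n) -> L2 <= L1.
Proof.
  intros Hcv Hle. apply Rnot_lt_le. intros Hlt.
  set (eps := (L2 - L1) / 2).
  destruct (Hcv eps ltac:(unfold eps; lra)) as [N1 HN1].
  destruct (div_succ_eventually_lt K eps ltac:(unfold eps; lra)) as [N2 HN2].
  set (k := Nat.max N1 N2).
  specialize (HN1 k ltac:(unfold k; lia)). specialize (HN2 k ltac:(unfold k; lia)).
  specialize (Hle (S k) ltac:(lia)).
  unfold R_dist in HN1. pose proof (Rle_abs (u (S k) - L1)). unfold eps in *. lra.
Qed.

Section Fekete.
Variables (b : nat -> R) (K : R).
Hypothesis b_ge0 : forall n, (1 <= n)%nat -> 0 <= b n.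
Hypothesis b_le_linear : forall n, (1 <= n)%nat -> b n <= INR n * K.
Hypothesis b_subadd : forall n m, (1 <= n)%nat -> (1 <= m)%nat -> b (n + m) <= b n + b m.

Lemma subadd_mul q m : (1 <= q)%nat -> (1 <= m)%nat -> b (q * m) <= INR q * b m.
Proof.
  intros Hq Hm. induction q as [|[|q] IH]; [lia | simpl; rewrite Nat.add_0_r; lra |].
  replace (S (S q) * m)%nat with (S q * m + m)%nat by lia.
  rewrite (S_INR (S q)). specialize (IH ltac:(lia)).
  pose proof (b_subadd (S q * m) m ltac:(lia) Hm). lra.
Qed.

Lemma subadd_euclid m n : (1 <= m)%nat -> (m <= n)%nat ->
  b n <= INR (n / m) * b m + INR m * K.
Proof.
  intros Hm Hmn.
  pose proof (Nat.div_mod n m ltac:(lia)) as Hdiv.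
  pose proof (Nat.mod_upper_bound n m ltac:(lia)) as Hrem.
  set (q := (n / m)%nat) in *. set (r := (n mod m)%nat) in *.
  assert (Hq : (1 <= q)%nat) by (destruct q; lia).
  pose proof (subadd_mul q m Hq Hm).
  assert (HK : 0 <= K).
  { pose proof (b_ge0 1 (le_n _)). pose proof (b_le_linear 1 (le_n _)). simpl in *. lra. }
  assert (HmK : 0 <= INR m * K) by (apply Rmult_le_pos; [apply pos_INR | exact HK]).
  destruct r as [|r].
  - replace n with (q * m)%nat by lia. lra.
  - replace n with (q * m + S r)%nat by lia.
    pose proof (b_subadd (q * m) (S r) ltac:(nia) ltac:(lia)).
    pose proof (b_le_linear (S r) ltac:(lia)).
    assert (INR (S r) * K <= INR m * K)
      by (apply Rmult_le_compat_r; [exact HK | apply le_INR; lia]).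
    lra.
Qed.

Lemma subadd_avg_le m n : (1 <= m)%nat -> (m <= n)%nat ->
  b n / INR n <= b m / INR m + INR m * K / INR n.
Proof.
  intros Hm Hmn.
  assert (Hn0 : 0 < INR n) by (apply lt_0_INR; lia).
  assert (Hm0 : 0 < INR m) by (apply lt_0_INR; lia).
  assert (Hqm : INR (n / m) * INR m <= INR n).
  { rewrite <- mult_INR. apply le_INR. rewrite Nat.mul_comm. apply Nat.Div0.mul_div_le. }
  assert (Hqb : INR (n / m) * b m <= INR n * (b m / INR m)).
  { apply Rmult_le_reg_r with (INR m); [exact Hm0|].
    replace (INR n * (b m / INR m) * INR m) with (INR n * b m) by (field; lra).
    pose proof (b_ge0 m Hm). nra. }
  pose proof (subadd_euclid m n Hm Hmn).
  apply Rmult_le_reg_r with (INR n); [exact Hn0|].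
  replace (b n / INR n * INR n) with (b n) by (field; lra).
  replace ((b m / INR m + INR m * K / INR n) * INR n)
    with (INR n * (b m / INR m) + INR m * K) by (field; lra).
  lra.
Qed.

Lemma fekete : exists L, (forall n, (1 <= n)%nat -> L <= b n / INR n) /\
  Un_cv (fun k => b (S k) / INR (S k)) L.
Proof.
  set (A := fun y => exists n, (1 <= n)%nat /\ y = - (b n / INR n)).
  destruct (completeness A) as [M [HMub HMleast]].
  - exists 0. intros y [n [Hn ->]].
    assert (0 < / INR n) by (apply Rinv_0_lt_compat, lt_0_INR; lia).
    pose proof (b_ge0 n Hn). unfold Rdiv. nra.
  - exists (- (b 1 / INR 1)), 1%nat. auto.
  - assert (Hlow : forall n, (1 <= n)%nat -> - M <= b n / INR n).
    { intros n Hn. enough (- (b n / INR n) <= M) by lra. apply HMub. exists n; auto. }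
    exists (- M). split; [exact Hlow|]. intros eps Heps.
    assert (Hm : exists m, (1 <= m)%nat /\ b m / INR m < - M + eps / 2).
    { apply NNPP. intros Hno. enough (M <= M - eps / 2) by lra.
      apply HMleast. intros y [n [Hn ->]].
      destruct (Rlt_le_dec (b n / INR n) (- M + eps / 2)) as [h | h];
        [exfalso; apply Hno; exists n; auto | lra]. }
    destruct Hm as [m [Hm Hbm]].
    destruct (div_succ_eventually_lt (INR m * K) (eps / 2) ltac:(lra)) as [N HN].
    exists (Nat.max N m). intros k Hk. unfold R_dist.
    pose proof (subadd_avg_le m (S k) Hm ltac:(lia)).
    pose proof (Hlow (S k) ltac:(lia)).
    specialize (HN k ltac:(lia)).
    rewrite Rabs_right; lra.
Qed.

End Fekete.

Lemma Rpower_root_cv (a : nat -> R) L :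
  Un_cv (fun k => ln (a (S k)) / INR (S k)) L ->
  Un_cv (fun k => Rpower (a (S k)) (/ INR (S k))) (exp L).
Proof.
  intros Hcv. unfold Rpower.
  apply (Un_cv_ext (fun k => exp (ln (a (S k)) / INR (S k)))).
  { intros k. f_equal. unfold Rdiv. ring. }
  apply continuity_seq; [apply derivable_continuous_pt, derivable_pt_exp | exact Hcv].
Qed.

Lemma Rpower_root_glb (a : nat -> R) L :
  (forall n, (1 <= n)%nat -> L <= ln (a n) / INR n) ->
  Un_cv (fun k => ln (a (S k)) / INR (S k)) L ->
  is_glb (fun y => exists k, y = Rpower (a (S k)) (/ INR (S k))) (exp L).
Proof.
  intros Hlow Hcv. split.
  - intros y [k ->]. unfold Rpower.
    replace (/ INR (S k) * ln (a (S k))) with (ln (a (S k)) / INR (S k)) by (unfold Rdiv; ring).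
    destruct (Hlow (S k) ltac:(lia)) as [Hlt | ->];
      [left; apply exp_increasing, Hlt | right; reflexivity].
  - intros c Hc. apply Rnot_lt_le. intros Hlt.
    destruct (Rpower_root_cv a L Hcv (c - exp L) ltac:(lra)) as [N HN].
    specialize (HN N (le_n _)). unfold R_dist in HN.
    pose proof (Rle_abs (Rpower (a (S N)) (/ INR (S N)) - exp L)).
    assert (c <= Rpower (a (S N)) (/ INR (S N))) by (apply Hc; exists N; reflexivity).
    lra.
Qed.

Lemma shift_int (g : R -> R) c : (forall x, g (x + 1) = g x + c) ->
  forall j x, g (x + IZR j) = g x + IZR j * c.
Proof.
  intros H j. induction j using Z.peano_ind; intros x.
  - rewrite Rplus_0_r. ring.
  - rewrite succ_IZR. replace (x + (IZR j + 1)) with ((x + IZR j) + 1) by ring.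
    rewrite H, IHj. ring.
  - rewrite <- Z.sub_1_r, minus_IZR. specialize (H (x + (IZR j - 1))).
    replace (x + (IZR j - 1) + 1) with (x + IZR j) in H by ring. rewrite IHj in H. lra.
Qed.

Lemma derive_periodic (g dg : R -> R) c : (forall x, g (x + 1) = g x + c) ->
  (forall x, derivable_pt_lim g x (dg x)) -> forall x, dg (x + 1) = dg x.
Proof.
  intros Hp Hd x. apply (uniqueness_limite g x); [|apply Hd].
  intros eps Heps. destruct (Hd (x + 1) eps Heps) as [d Hdd]. exists d. intros h hn hh.
  specialize (Hdd h hn hh). replace (x + 1 + h) with ((x + h) + 1) in Hdd by ring.
  rewrite !Hp in Hdd. replace (g (x + h) + c - (g x + c)) with (g (x + h) - g x) in Hdd by ring.
  exact Hdd.
Qed.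

Lemma mat_mulA A B C : mat_mul (mat_mul A B) C = mat_mul A (mat_mul B C).
Proof. destruct A, B, C; unfold mat_mul; simpl; f_equal; ring. Qed.

Lemma mat_mul1l A : mat_mul (Mat2 1 0 0 1) A = A.
Proof. destruct A; unfold mat_mul; simpl; f_equal; ring. Qed.

Lemma mat_app_mul A B w : mat_app (mat_mul A B) w = mat_app A (mat_app B w).
Proof. destruct A, B, w; unfold mat_app, mat_mul; simpl; f_equal; ring. Qed.

Lemma mat_app1 w : mat_app (Mat2 1 0 0 1) w = w.
Proof. destruct w; unfold mat_app; simpl; f_equal; ring. Qed.

Lemma mat_appZ A c w :
  mat_app A (c * fst w, c * snd w) = (c * fst (mat_app A w), c * snd (mat_app A w)).
Proof. destruct A, w; unfold mat_app; simpl; f_equal; ring. Qed.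

Lemma mat_app_lower_inj a c u u' : 0 < a ->
  mat_app (Mat2 a 0 c 1) u = mat_app (Mat2 a 0 c 1) u' -> u = u'.
Proof.
  destruct u as [x y], u' as [x' y']; unfold mat_app; simpl; intros Ha H.
  injection H as H1 H2. assert (x = x') by (apply Rmult_eq_reg_l with a; lra).
  subst. f_equal. lra.
Qed.

Lemma exists_unit_multiple (u : R * R) : 0 < fst u * fst u + snd u * snd u ->
  exists s, 0 < s /\ (/ s * fst u) * (/ s * fst u) + (/ s * snd u) * (/ s * snd u) = 1.
Proof.
  destruct u as [x y]; simpl. intros Hq. exists (sqrt (x * x + y * y)).
  pose proof (sqrt_lt_R0 _ Hq) as Hs. pose proof (sqrt_sqrt _ (Rlt_le _ _ Hq)) as Hss.
  set (s := sqrt (x * x + y * y)) in *. split; [exact Hs|].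
  replace (/ s * x * (/ s * x) + / s * y * (/ s * y)) with ((x * x + y * y) / (s * s))
    by (field; lra).
  rewrite Hss. field. lra.
Qed.

Definition pair_eq_dec (p q : R * R) : {p = q} + {p <> q}.
Proof. decide equality; apply Req_EM_T. Defined.

Lemma length_le_fibers {A B : Type} (decB : forall x y : B, {x = y} + {x <> y})
  (g : A -> B) (K : R) : 0 <= K -> forall Ys l, NoDup l ->
  (forall y l', incl l' l -> NoDup l' -> (forall x, In x l' -> g x = y) ->
     INR (length l') <= K) ->
  (forall x, In x l -> In (g x) Ys) -> INR (length l) <= INR (length Ys) * K.
Proof.
  intros HK Ys. induction Ys as [|y Ys IH]; intros l Hnd Hfib Hin.
  - destruct l as [|x l]; [simpl; lra | exfalso; apply (Hin x); left; reflexivity].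
  - set (p := fun x => if decB (g x) y then true else false).
    rewrite <- (filter_length p l), plus_INR. simpl length. rewrite S_INR.
    assert (INR (length (filter p l)) <= K).
    { apply Hfib with y.
      - intros x Hx; apply filter_In in Hx; tauto.
      - apply NoDup_filter; exact Hnd.
      - intros x Hx; apply filter_In in Hx as [_ Hx]; unfold p in Hx.
        destruct (decB (g x) y); [assumption | discriminate]. }
    assert (INR (length (filter (fun x => negb (p x)) l)) <= INR (length Ys) * K).
    { apply IH.
      - apply NoDup_filter; exact Hnd.
      - intros y' l' Hi Hn Hg; apply Hfib with y'; auto.
        intros x Hx. apply Hi in Hx. apply filter_In in Hx; tauto.
      - intros x Hx; apply filter_In in Hx as [Hx Hp].
        destruct (Hin x Hx) as [He | He]; [|exact He]. unfold p in Hp.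
        destruct (decB (g x) y); simpl in Hp; congruence. }
    lra.
Qed.

Lemma has_card_of_bounded (P : R * R -> Prop) (B : nat) :
  (forall l, NoDup l -> (forall x, In x l -> P x) -> (length l <= B)%nat) ->
  exists k, has_card P k.
Proof.
  intros HB.
  assert (Hgrow : forall d l, NoDup l -> (forall x, In x l -> P x) ->
    (B - length l <= d)%nat -> exists k, has_card P k).
  { induction d as [|d IHd]; intros l Hl HP Hd.
    all: destruct (classic (forall x, P x -> In x l)) as [Hc | Hc];
      [exists (length l), l; split; [exact Hl | split; [intro x; split; auto | reflexivity]] |].
    all: apply not_all_ex_not in Hc as [x Hx]; apply imply_to_and in Hx as [Px nIn].
    all: assert (Hl' : NoDup (x :: l)) by (constructor; assumption).
    all: assert (HP' : forall y, In y (x :: l) -> P y) by (intros y [<- | Hy]; auto).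
    all: pose proof (HB _ Hl' HP'); simpl in *.
    - lia.
    - apply (IHd (x :: l)); auto; simpl; lia. }
  apply (Hgrow B nil); [constructor | intros x [] | simpl; lia].
Qed.

Lemma has_card_ge (P : R * R -> Prop) k l : has_card P k -> NoDup l ->
  (forall x, In x l -> P x) -> (length l <= k)%nat.
Proof.
  intros [l0 [Hn [Hiff <-]]] Hl HP. apply NoDup_incl_length; [exact Hl|].
  intros x Hx. apply Hiff, HP, Hx.
Qed.

Lemma up_IZR k : up (IZR k) = (k + 1)%Z.
Proof. symmetry; apply tech_up; rewrite plus_IZR; lra. Qed.

Lemma NoDup_Z_window_length (a : R) (N : nat) (l : list Z) : NoDup l ->
  (forall k, In k l -> a <= IZR k < a + INR N) -> (length l <= N)%nat.
Proof.
  intros Hnd Hwin.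
  set (c := (- Int_part (- a))%Z). (* the ceiling of [a] *)
  destruct (base_Int_part (- a)) as [A1 A2].
  assert (Hrange : forall k, In k l -> (c <= k < c + Z.of_nat N)%Z).
  { intros k Hk. destruct (Hwin k Hk) as [W1 W2].
    assert (Hlo : IZR (c - 1) < IZR k) by (unfold c; rewrite minus_IZR, opp_IZR; lra).
    assert (Hhi : IZR k < IZR (c + Z.of_nat N))
      by (unfold c; rewrite plus_IZR, opp_IZR, <- INR_IZR_INZ; lra).
    apply lt_IZR in Hlo. apply lt_IZR in Hhi. lia. }
  set (phi := fun k => Z.to_nat (k - c)).
  rewrite <- (length_map phi l), <- (length_seq N 0).
  apply NoDup_incl_length.
  - apply NoDup_map_NoDup_ForallPairs; [|exact Hnd].
    intros k k' Hk Hk' He. pose proof (Hrange k Hk). pose proof (Hrange k' Hk').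
    unfold phi in He. lia.
  - intros y Hy. apply in_map_iff in Hy as [k [<- Hk]]. apply in_seq.
    pose proof (Hrange k Hk). unfold phi. lia.
Qed.

Section SkewProduct.
Variable ell : nat.
Variables E dE tau dtau : R -> R.
Variables lam Mtau : R.
Hypothesis HE_lift : forall x, E (x + 1) = E x + INR ell.
Hypothesis HdE : forall x, derivable_pt_lim E x (dE x).
Hypothesis Hlam : 1 < lam.
Hypothesis HdE_low : forall x, lam <= dE x.
Hypothesis Htau_per : forall x, tau (x + 1) = tau x.
Hypothesis Hdtau : forall x, derivable_pt_lim tau x (dtau x).
Hypothesis HdtauM : forall x, Rabs (dtau x) <= Mtau.

Local Notation sk := (skew_iter E tau).
Local Notation D := (Dskew_iter E tau dE dtau).
Local Notation Nc Rc n := (Ncal E tau dE dtau lam Rc n).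
Local Notation gp Rc n z v := (good_preimage E tau dE dtau lam Rc n z v).

Lemma Mtau_ge0 : 0 <= Mtau.
Proof. pose proof (HdtauM 0). pose proof (Rabs_pos (dtau 0)). lra. Qed.

Lemma E_shift_int j x : E (x + IZR j) = E x + IZR j * INR ell.
Proof. apply shift_int, HE_lift. Qed.

Lemma tau_shift_int j x : tau (x + IZR j) = tau x.
Proof. rewrite (shift_int tau 0); [ring | intros; rewrite Htau_per; ring]. Qed.

Lemma dE_shift_int j x : dE (x + IZR j) = dE x.
Proof.
  rewrite (shift_int dE 0); [ring|].
  intros; rewrite (derive_periodic E dE (INR ell)); auto; ring.
Qed.

Lemma dtau_shift_int j x : dtau (x + IZR j) = dtau x.
Proof.
  rewrite (shift_int dtau 0); [ring|].
  intros; rewrite (derive_periodic tau dtau 0);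
    [ring | intros; rewrite Htau_per; ring | exact Hdtau].
Qed.

Lemma skew_iter_fiber n x s : sk n (x, s) = (fst (sk n (x, 0)), s + snd (sk n (x, 0))).
Proof.
  induction n as [|n IH]; simpl; [f_equal; ring|].
  rewrite IH. unfold skew; simpl. f_equal; ring.
Qed.

Lemma skew_iter_shift_int n p j1 j2 : exists k1 k2,
  sk n (fst p + IZR j1, snd p + IZR j2) = (fst (sk n p) + IZR k1, snd (sk n p) + IZR k2).
Proof.
  induction n as [|n [k1 [k2 IH]]]; [exists j1, j2; reflexivity|].
  simpl. rewrite IH. unfold skew; simpl.
  exists (k1 * Z.of_nat ell)%Z, k2. rewrite E_shift_int, tau_shift_int.
  f_equal; [rewrite mult_IZR, <- INR_IZR_INZ|]; ring.
Qed.

Lemma skew_iter_add n m p : sk (n + m) p = sk n (sk m p).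
Proof. induction n as [|n IH]; simpl; [reflexivity | rewrite IH; reflexivity]. Qed.

Lemma Dskew_iter_shift_int n p j1 j2 : D n (fst p + IZR j1, snd p + IZR j2) = D n p.
Proof.
  induction n as [|n IH]; simpl; [reflexivity|]. rewrite IH.
  destruct (skew_iter_shift_int n p j1 j2) as [k1 [k2 ->]]. unfold Dskew; simpl.
  rewrite dE_shift_int, dtau_shift_int. reflexivity.
Qed.

Lemma Dskew_iter_add n m p : D (n + m) p = mat_mul (D n (sk m p)) (D m p).
Proof.
  induction n as [|n IH]; simpl; [rewrite mat_mul1l; reflexivity|].
  rewrite IH, skew_iter_add, mat_mulA. reflexivity.
Qed.

Lemma Dskew_iter_lower n p : exists a c, D n p = Mat2 a 0 c 1 /\ lam ^ n <= a.
Proof.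
  induction n as [|n [a [c [Ha Hl]]]].
  { exists 1, 0. simpl. split; [reflexivity | right; reflexivity]. }
  simpl. rewrite Ha. unfold mat_mul, Dskew; simpl.
  exists (dE (fst (sk n p)) * a), (dtau (fst (sk n p)) * a + c). split; [f_equal; ring|].
  pose proof (HdE_low (fst (sk n p))). pose proof (pow_le lam n ltac:(lra)).
  apply Rmult_le_compat; lra.
Qed.

Lemma theta_ge0 Rc : 0 <= Rc -> 0 <= theta lam Rc.
Proof.
  intros H. unfold theta, Rdiv.
  apply Rmult_le_pos; [exact H | left; apply Rinv_0_lt_compat; lra].
Qed.

Lemma in_cone_Dskew Rc p w : Mtau <= Rc -> in_cone lam Rc w ->
  in_cone lam (Mtau + / lam * (Rc - Mtau)) (mat_app (Dskew dE dtau p) w).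
Proof.
  intros HR Hw. unfold in_cone in *.
  replace (theta lam (Mtau + / lam * (Rc - Mtau))) with ((Mtau + theta lam Rc) / lam)
    by (unfold theta; field; lra).
  destruct w as [xi eta]. unfold mat_app, Dskew; simpl in *.
  pose proof Mtau_ge0. pose proof (theta_ge0 Rc ltac:(lra)).
  set (th := theta lam Rc) in *. set (x := fst p).
  pose proof (HdE_low x). pose proof (HdtauM x). pose proof (Rabs_pos xi).
  rewrite Rmult_0_l, Rplus_0_r, Rmult_1_l, Rabs_mult, (Rabs_right (dE x)) by lra.
  eapply Rle_trans; [apply Rabs_triang|]. rewrite Rabs_mult.
  assert (Rabs (dtau x) * Rabs xi <= Mtau * Rabs xi) by (apply Rmult_le_compat_r; auto).
  assert (lam * Rabs xi <= dE x * Rabs xi) by (apply Rmult_le_compat_r; auto).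
  assert (0 <= (Mtau + th) / lam)
    by (apply Rmult_le_pos; [lra | left; apply Rinv_0_lt_compat; lra]).
  assert (HH : (Mtau + th) / lam * (lam * Rabs xi) <= (Mtau + th) / lam * (dE x * Rabs xi))
    by (apply Rmult_le_compat_l; auto).
  replace ((Mtau + th) / lam * (lam * Rabs xi)) with (Mtau * Rabs xi + th * Rabs xi) in HH
    by (field; lra).
  lra.
Qed.

Lemma in_cone_Dskew_iter m Rc p w : Mtau <= Rc -> in_cone lam Rc w ->
  in_cone lam (Mtau + / lam ^ m * (Rc - Mtau)) (mat_app (D m p) w).
Proof.
  revert Rc w. induction m as [|m IH]; intros Rc w HR Hw; simpl.
  - rewrite mat_app1. replace (Mtau + / 1 * (Rc - Mtau)) with Rc by field. exact Hw.
  - rewrite mat_app_mul.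
    assert (Hp : 0 < lam ^ m) by (apply pow_lt; lra).
    replace (Mtau + / (lam * lam ^ m) * (Rc - Mtau)) with
      (Mtau + / lam * ((Mtau + / lam ^ m * (Rc - Mtau)) - Mtau)) by (field; lra).
    apply in_cone_Dskew; [|apply IH; assumption].
    assert (0 <= / lam ^ m * (Rc - Mtau))
      by (apply Rmult_le_pos; [left; apply Rinv_0_lt_compat|]; lra).
    lra.
Qed.

Lemma in_cone_mono Rc1 Rc2 w : Rc1 <= Rc2 -> in_cone lam Rc1 w -> in_cone lam Rc2 w.
Proof.
  unfold in_cone, theta. intros H Hw. eapply Rle_trans; [exact Hw|].
  apply Rmult_le_compat_r; [apply Rabs_pos|]. apply Rmult_le_compat_r; [|exact H].
  left; apply Rinv_0_lt_compat; lra.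
Qed.

Lemma in_coneZ Rc c w : in_cone lam Rc w -> in_cone lam Rc (c * fst w, c * snd w).
Proof.
  unfold in_cone; simpl. intros H. rewrite !Rabs_mult.
  replace (theta lam Rc * (Rabs c * Rabs (fst w)))
    with (Rabs c * (theta lam Rc * Rabs (fst w))) by ring.
  apply Rmult_le_compat_l; [apply Rabs_pos | exact H].
Qed.

Lemma contracted_radius_le Rc m : Mtau <= Rc -> Mtau + / lam ^ m * (Rc - Mtau) <= Rc.
Proof.
  intros H. assert (H1 : 1 <= lam ^ m) by (apply pow_R1_Rle; lra).
  assert (H2 : / lam ^ m <= 1) by (rewrite <- Rinv_1; apply Rinv_le_contravar; lra).
  assert (0 <= / lam ^ m) by (left; apply Rinv_0_lt_compat; lra).
  assert (/ lam ^ m * (Rc - Mtau) <= 1 * (Rc - Mtau)) by (apply Rmult_le_compat_r; lra).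
  lra.
Qed.

Lemma contracted_radius_ge Rc m : Mtau <= Rc -> Mtau <= Mtau + / lam ^ m * (Rc - Mtau).
Proof.
  intros H. assert (0 <= / lam ^ m * (Rc - Mtau))
    by (apply Rmult_le_pos; [left; apply Rinv_0_lt_compat, pow_lt|]; lra).
  lra.
Qed.

Lemma contracted_radius_below R1 R2 : Mtau < R1 -> Mtau <= R2 ->
  exists m, Mtau + / lam ^ m * (R2 - Mtau) <= R1.
Proof.
  intros H1 H2.
  assert (Hinv : Rabs (/ lam) < 1).
  { rewrite Rabs_right by (left; apply Rinv_0_lt_compat; lra).
    rewrite <- Rinv_1. apply Rinv_lt_contravar; lra. }
  destruct (pow_lt_1_zero (/ lam) Hinv ((R1 - Mtau) / (R2 - Mtau + 1)))
    as [m Hm]; [apply Rdiv_lt_0_compat; lra|].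
  exists m. specialize (Hm m (le_n _)).
  rewrite pow_inv, Rabs_right in Hm by (left; apply Rinv_0_lt_compat, pow_lt; lra).
  assert (0 < / lam ^ m) by (apply Rinv_0_lt_compat, pow_lt; lra).
  apply Rmult_lt_compat_r with (r := R2 - Mtau + 1) in Hm; [|lra].
  replace ((R1 - Mtau) / (R2 - Mtau + 1) * (R2 - Mtau + 1)) with (R1 - Mtau) in Hm
    by (field; lra).
  nra.
Qed.

Lemma E_increasing x y : x < y -> E x < E y.
Proof.
  intros H.
  destruct (MVT_cor1 E x y (fun z => exist _ (dE z) (HdE z)) H) as [c [Hc _]]. simpl in Hc.
  pose proof (HdE_low c). assert (0 < dE c * (y - x)) by (apply Rmult_lt_0_compat; lra). lra.
Qed.

Lemma skew_iter_fst_increasing n x y : x < y -> fst (sk n (x, 0)) < fst (sk n (y, 0)).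
Proof. intros H. induction n as [|n IH]; simpl; [exact H | apply E_increasing, IH]. Qed.

Lemma skew_iter_fst_add1 n x : fst (sk n (x + 1, 0)) = fst (sk n (x, 0)) + INR (ell ^ n).
Proof.
  induction n as [|n IH]; simpl; [ring|].
  rewrite IH, INR_IZR_INZ, E_shift_int, <- INR_IZR_INZ, mult_INR. ring.
Qed.

(** [x |-> fst (f^n (x, 0))] lifts [E^n]: it maps [[0,1)] increasingly into a window of
    length [ell^n]. *)
Lemma preimage_window n z x s : preimage E tau n z (x, s) ->
  fst (sk n (0, 0)) <= fst (sk n (x, 0)) < fst (sk n (0, 0)) + INR (ell ^ n).
Proof.
  intros [Hx _]. simpl in Hx. split.
  - destruct (Req_dec 0 x) as [<- | Hne]; [right; reflexivity|].
    left; apply skew_iter_fst_increasing; lra.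
  - rewrite <- skew_iter_fst_add1. apply skew_iter_fst_increasing; lra.
Qed.

Lemma preimage_inj n z p q : preimage E tau n z p -> preimage E tau n z q ->
  fst (sk n (fst p, 0)) = fst (sk n (fst q, 0)) -> p = q.
Proof.
  destruct p as [x s], q as [x' s']. simpl.
  intros [_ [Hs [_ [k Hk]]]] [_ [Hs' [_ [k' Hk']]]] Hfst.
  assert (x = x').
  { destruct (Rtotal_order x x') as [h | [h | h]]; [| exact h |];
      apply (skew_iter_fst_increasing n) in h; lra. }
  subst x'. rewrite skew_iter_fiber in Hk, Hk'. simpl in *.
  assert (Hd : s - s' = IZR (k - k')) by (rewrite minus_IZR; lra).
  assert (Hk0 : (k - k')%Z = 0%Z).
  { assert (-1 < IZR (k - k') < 1) as [H1 H2] by lra.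
    apply lt_IZR in H1. apply lt_IZR in H2. lia. }
  rewrite Hk0 in Hd. f_equal. simpl in Hd. lra.
Qed.

Lemma preimage_count n z l : NoDup l -> (forall p, In p l -> preimage E tau n z p) ->
  (length l <= ell ^ n)%nat.
Proof.
  intros Hnd Hpre.
  set (level := fun p : R * R => Z.sub (up (fst (sk n (fst p, 0)) - fst z)) 1).
  assert (Hlevel : forall p, In p l -> fst (sk n (fst p, 0)) - fst z = IZR (level p)).
  { intros [x s] Hp. destruct (Hpre _ Hp) as [_ [_ [[k Hk] _]]].
    rewrite skew_iter_fiber in Hk. simpl in *. unfold level; simpl.
    rewrite Hk, up_IZR. f_equal. lia. }
  rewrite <- (length_map level l).
  apply (NoDup_Z_window_length (fst (sk n (0, 0)) - fst z)).
  - apply NoDup_map_NoDup_ForallPairs; [|exact Hnd].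
    intros p q Hp Hq He. apply (preimage_inj n z); auto.
    pose proof (Hlevel p Hp). pose proof (Hlevel q Hq). rewrite He in *. lra.
  - intros k Hk. apply in_map_iff in Hk as [[x s] [<- Hp]].
    rewrite <- Hlevel by exact Hp. pose proof (preimage_window n z x s (Hpre _ Hp)). simpl. lra.
Qed.

Lemma good_preimage_card Rc n z v : exists k, has_card (gp Rc n z v) k.
Proof.
  apply (has_card_of_bounded _ (ell ^ n)). intros l Hl HP.
  apply (preimage_count n z l Hl). intros p Hp; apply HP, Hp.
Qed.

Lemma Ncal_lub Rc n : is_lub (N_values E tau dE dtau lam Rc n) (Nc Rc n).
Proof.
  unfold Ncal. apply epsilon_spec.
  destruct (completeness (N_values E tau dE dtau lam Rc n)) as [s Hs]; [| |exists s; exact Hs].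
  - exists (INR (ell ^ n)). intros y [z [v [k [_ [[l [Hnd [Hiff <-]]] ->]]]]].
    apply le_INR, (preimage_count n z l Hnd). intros p Hp; apply Hiff, Hp.
  - destruct (good_preimage_card Rc n (0, 0) (1, 0)) as [k Hk].
    exists (INR k), (0, 0), (1, 0), k. simpl. split; [ring | auto].
Qed.

Lemma length_le_Ncal Rc n z v l : fst v * fst v + snd v * snd v = 1 -> NoDup l ->
  (forall p, In p l -> gp Rc n z v p) -> INR (length l) <= Nc Rc n.
Proof.
  intros Hu Hnd H. destruct (good_preimage_card Rc n z v) as [k Hk].
  apply Rle_trans with (INR k); [apply le_INR, (has_card_ge (gp Rc n z v) k l); auto|].
  apply (proj1 (Ncal_lub Rc n)). exists z, v, k. auto.
Qed.

Lemma Ncal_le Rc n B : (forall z v l, fst v * fst v + snd v * snd v = 1 -> NoDup l ->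
  (forall p, In p l -> gp Rc n z v p) -> INR (length l) <= B) -> Nc Rc n <= B.
Proof.
  intros HB. apply (proj2 (Ncal_lub Rc n)).
  intros y [z [v [k [Hu [[l [Hnd [Hiff <-]]] ->]]]]].
  apply (HB z v); auto. intros p Hp; apply Hiff, Hp.
Qed.

Lemma Ncal_le_pow Rc n : Nc Rc n <= INR (ell ^ n).
Proof.
  apply Ncal_le. intros z v l _ Hnd H. apply le_INR, (preimage_count n z l Hnd).
  intros p Hp; apply H, Hp.
Qed.

(** The origin is a good preimage of [f^n(0)] for the direction of [Df^n(0) (1,0)]. *)
Lemma Ncal_ge1 Rc n : Mtau <= Rc -> 1 <= Nc Rc n.
Proof.
  intros HR.
  destruct (Dskew_iter_lower n (0, 0)) as [a [c [Ha Hl]]].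
  assert (Hap : 0 < a) by (pose proof (pow_lt lam n ltac:(lra)); lra).
  destruct (exists_unit_multiple (a, c) ltac:(simpl; nra)) as [s [Hs Hu]]. simpl in Hu.
  apply (length_le_Ncal Rc n (sk n (0, 0)) (/ s * a, / s * c) [(0, 0)]);
    [exact Hu | repeat constructor; intros [] |].
  intros p [<- | []]. split.
  - unfold preimage. simpl. repeat split; try lra; exists 0%Z; simpl; ring.
  - exists (/ s, 0). split.
    + unfold in_cone. simpl. rewrite Rabs_R0.
      apply Rmult_le_pos; [apply theta_ge0; pose proof Mtau_ge0; lra | apply Rabs_pos].
    + rewrite Ha. unfold mat_app; simpl. f_equal; ring.
Qed.

Lemma Ncal_mono Rc1 Rc2 n : Rc1 <= Rc2 -> Nc Rc1 n <= Nc Rc2 n.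
Proof.
  intros H. apply Ncal_le. intros z v l Hu Hnd Hg. apply (length_le_Ncal Rc2 n z v); auto.
  intros p Hp. destruct (Hg p Hp) as [Hpre [w [Hw Hv]]].
  split; [exact Hpre|]. exists w. split; [apply in_cone_mono with Rc1; assumption | exact Hv].
Qed.

Definition red (p : R * R) : R * R := (frac_part (fst p), frac_part (snd p)).

Lemma red_decomp p : exists j1 j2, p = (fst (red p) + IZR j1, snd (red p) + IZR j2).
Proof.
  exists (Int_part (fst p)), (Int_part (snd p)). destruct p as [x s]. unfold red; simpl.
  rewrite (Rplus_Int_part_frac_part x) at 1. rewrite (Rplus_Int_part_frac_part s) at 1.
  f_equal; ring.
Qed.

Lemma red_range p : 0 <= fst (red p) < 1 /\ 0 <= snd (red p) < 1.
Proof. unfold red; simpl. pose proof (base_fp (fst p)). pose proof (base_fp (snd p)). lra. Qed.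

Lemma preimage_add_split Rc n m z zeta w : Mtau <= Rc ->
  preimage E tau (n + m) z zeta -> in_cone lam Rc w ->
  preimage E tau n z (red (sk m zeta)) /\ preimage E tau m (red (sk m zeta)) zeta /\
  in_cone lam (Mtau + / lam ^ m * (Rc - Mtau)) (mat_app (D m zeta) w) /\
  mat_app (D (n + m) zeta) w = mat_app (D n (red (sk m zeta))) (mat_app (D m zeta) w).
Proof.
  intros HR Hpre Hw.
  set (y := red (sk m zeta)).
  destruct (red_decomp (sk m zeta)) as [j1 [j2 Hd]]. fold y in Hd.
  pose proof (red_range (sk m zeta)) as Hy. fold y in Hy.
  destruct Hpre as [Hz1 [Hz2 [[K1 HK1] [K2 HK2]]]].
  rewrite skew_iter_add, Hd in HK1, HK2.
  destruct (skew_iter_shift_int n y j1 j2) as [k1 [k2 Hsh]].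
  rewrite Hsh in HK1, HK2. simpl in HK1, HK2.
  split; [|split; [|split]].
  - repeat split; try tauto; [exists (K1 - k1)%Z | exists (K2 - k2)%Z]; rewrite minus_IZR; lra.
  - repeat split; try tauto; [exists j1 | exists j2]; rewrite Hd; simpl; ring.
  - apply in_cone_Dskew_iter; assumption.
  - rewrite Dskew_iter_add, mat_app_mul, Hd, Dskew_iter_shift_int. reflexivity.
Qed.

Lemma fiber_length_le_Ncal Rc n m z v l y : Mtau <= Rc ->
  fst v * fst v + snd v * snd v = 1 -> NoDup l ->
  (forall zeta, In zeta l -> gp Rc (n + m) z v zeta) ->
  (forall zeta, In zeta l -> red (sk m zeta) = y) -> INR (length l) <= Nc Rc m.
Proof.
  intros HR Hv Hnd Hgood Hfib.
  destruct l as [|zeta0 l0]; [simpl; pose proof (Ncal_ge1 Rc m HR); lra|].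
  destruct (Hgood zeta0 (or_introl eq_refl)) as [Hp0 [w0 [Hw0 Hv0]]].
  destruct (preimage_add_split Rc n m z zeta0 w0 HR Hp0 Hw0) as [_ [_ [_ Ht0]]].
  rewrite (Hfib zeta0 (or_introl eq_refl)) in Ht0.
  set (u0 := mat_app (D m zeta0) w0) in *. clearbody u0.
  destruct (Dskew_iter_lower n y) as [a [c [Ha Hl]]].
  assert (Hap : 0 < a) by (pose proof (pow_lt lam n ltac:(lra)); lra).
  assert (Hq : 0 < fst u0 * fst u0 + snd u0 * snd u0).
  { destruct (Req_dec (fst u0) 0) as [h1 | h1]; [destruct (Req_dec (snd u0) 0) as [h2 | h2] |];
      try nra.
    rewrite Ht0, Ha in Hv0. unfold mat_app in Hv0. rewrite h1, h2 in Hv0. rewrite <- Hv0 in Hv.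
    simpl in Hv. lra. }
  destruct (exists_unit_multiple u0 Hq) as [s [Hs Hu]].
  apply (length_le_Ncal Rc m y (/ s * fst u0, / s * snd u0)); [exact Hu | exact Hnd |].
  intros zeta Hz.
  destruct (Hgood zeta Hz) as [Hp [w [Hw Hvw]]].
  destruct (preimage_add_split Rc n m z zeta w HR Hp Hw) as [_ [Hpm [_ Ht]]].
  rewrite (Hfib zeta Hz) in Ht, Hpm.
  assert (Hu0 : mat_app (D m zeta) w = u0).
  { rewrite Ha in Ht, Ht0. apply (mat_app_lower_inj a c); [exact Hap|]. congruence. }
  split; [exact Hpm|]. exists (/ s * fst w, / s * snd w).
  split; [apply in_coneZ, Hw | rewrite mat_appZ, Hu0; reflexivity].
Qed.

Lemma Ncal_submul n m Rc : Mtau <= Rc ->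
  Nc Rc (n + m) <= Nc (Mtau + / lam ^ m * (Rc - Mtau)) n * Nc Rc m.
Proof.
  intros HR.
  assert (HN0 : 0 <= Nc Rc m) by (pose proof (Ncal_ge1 Rc m HR); lra).
  apply Ncal_le. intros z v l Hu Hnd Hgood.
  set (g := fun zeta => red (sk m zeta)).
  apply Rle_trans with (INR (length (nodup pair_eq_dec (map g l))) * Nc Rc m).
  - apply (length_le_fibers pair_eq_dec g); [exact HN0 | exact Hnd | |].
    + intros y l' Hincl Hnd' Hfib.
      apply (fiber_length_le_Ncal Rc n m z v l' y); auto.
    + intros x Hx. apply nodup_In, in_map, Hx.
  - apply Rmult_le_compat_r; [exact HN0|].
    apply (length_le_Ncal _ n z v); [exact Hu | apply NoDup_nodup |].
    intros y Hy. apply nodup_In, in_map_iff in Hy as [zeta [<- Hz]].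
    destruct (Hgood zeta Hz) as [Hp [w [Hw Hv]]].
    destruct (preimage_add_split Rc n m z zeta w HR Hp Hw) as [Hpn [_ [Hc Ht]]].
    split; [exact Hpn|]. exists (mat_app (D m zeta) w).
    split; [exact Hc | unfold g; rewrite <- Ht; exact Hv].
Qed.

Lemma INR_ell_ge1 : 1 <= INR ell.
Proof.
  pose proof (Ncal_ge1 Mtau 1 (Rle_refl _)). pose proof (Ncal_le_pow Mtau 1).
  rewrite Nat.pow_1_r in *. lra.
Qed.

Lemma ln_Ncal_ge0 Rc n : Mtau <= Rc -> 0 <= ln (Nc Rc n).
Proof.
  intros H. rewrite <- ln_1. apply ln_le_ln; [lra | apply Ncal_ge1, H].
Qed.

Lemma ln_Ncal_le Rc n : Mtau <= Rc -> ln (Nc Rc n) <= INR n * ln (INR ell).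
Proof.
  intros H. pose proof INR_ell_ge1.
  rewrite <- ln_pow, <- pow_INR by lra.
  apply ln_le_ln; [pose proof (Ncal_ge1 Rc n H); lra | apply Ncal_le_pow].
Qed.

Lemma ln_Ncal_submul Rc R' n m : Mtau <= Rc -> Mtau + / lam ^ m * (Rc - Mtau) <= R' ->
  ln (Nc Rc (n + m)) <= ln (Nc R' n) + ln (Nc Rc m).
Proof.
  intros HR HR'. pose proof Mtau_ge0. pose proof (contracted_radius_ge Rc m HR).
  assert (Hn : 1 <= Nc R' n) by (apply Ncal_ge1; lra).
  assert (Hm : 1 <= Nc Rc m) by (apply Ncal_ge1; lra).
  rewrite <- ln_mult by lra.
  apply ln_le_ln; [pose proof (Ncal_ge1 Rc (n + m) HR); lra|].
  eapply Rle_trans; [apply Ncal_submul, HR|].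
  apply Rmult_le_compat_r; [lra | apply Ncal_mono, HR'].
Qed.

Lemma ln_Ncal_fekete Rc : Mtau <= Rc -> exists L,
  (forall n, (1 <= n)%nat -> L <= ln (Nc Rc n) / INR n) /\
  Un_cv (fun k => ln (Nc Rc (S k)) / INR (S k)) L.
Proof.
  intros H. apply (fekete (fun n => ln (Nc Rc n)) (ln (INR ell))).
  - intros n _. apply ln_Ncal_ge0, H.
  - intros n _. apply ln_Ncal_le, H.
  - intros n m _ _. apply ln_Ncal_submul; [exact H | apply contracted_radius_le, H].
Qed.

Lemma ln_Ncal_rate_le R1 R2 L1 L2 : Mtau < R1 -> Mtau <= R2 ->
  Un_cv (fun k => ln (Nc R1 (S k)) / INR (S k)) L1 ->
  (forall n, (1 <= n)%nat -> L2 <= ln (Nc R2 n) / INR n) -> L2 <= L1.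
Proof.
  intros H1 H2 Hcv Hlow.
  destruct (contracted_radius_below R1 R2 H1 H2) as [m Hm].
  apply (le_lim_of_le_plus_div (fun n => ln (Nc R1 n) / INR n) L1 L2 (INR m * ln (INR ell)));
    [exact Hcv|].
  intros n Hn.
  assert (HK : 0 <= INR m * ln (INR ell)).
  { apply Rmult_le_pos; [apply pos_INR|]. rewrite <- ln_1. apply ln_le_ln, INR_ell_ge1; lra. }
  pose proof (ln_Ncal_submul R2 R1 n m H2 Hm). pose proof (ln_Ncal_le R2 m H2).
  pose proof (ln_Ncal_ge0 R1 n ltac:(lra)).
  assert (Hn0 : 0 < INR n) by (apply lt_0_INR; lia).
  assert (Hnm : INR n <= INR (n + m)) by (apply le_INR; lia).
  eapply Rle_trans; [apply (Hlow (n + m)%nat); lia|].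
  apply Rle_trans with ((ln (Nc R1 n) + INR m * ln (INR ell)) / INR (n + m)).
  { unfold Rdiv. apply Rmult_le_compat_r; [left; apply Rinv_0_lt_compat|]; lra. }
  apply Rle_trans with ((ln (Nc R1 n) + INR m * ln (INR ell)) / INR n).
  { unfold Rdiv. apply Rmult_le_compat_l; [lra | apply Rinv_le_contravar; lra]. }
  right. field. lra.
Qed.

End SkewProduct.

Theorem mainTheorem2
  (r : nat) (Hr : (2 <= r)%nat)
  (ell : nat) (Hell : (2 <= ell)%nat)
  (E dE : R -> R) (lam Lam : R)
  (HE_Cr : Cr r E)
  (HE_lift : forall x, E (x + 1) = E x + INR ell)
  (HdE : forall x, derivable_pt_lim E x (dE x))
  (Hlam : 1 < lam)
  (HdE_bnd : forall x, lam <= dE x <= Lam)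
  (tau dtau : R -> R)
  (Htau_Cr : Cr r tau)
  (Htau_per : forall x, tau (x + 1) = tau x)
  (Hdtau : forall x, derivable_pt_lim tau x (dtau x))
  (Mtau : R) (HMtau : is_lub (fun y => exists x, y = Rabs (dtau x)) Mtau)
  (Rc : R) (HRc : Mtau < Rc) :
  (forall n m : nat, (1 <= n)%nat -> (1 <= m)%nat ->
     Ncal E tau dE dtau lam Rc (n + m)
       <= Ncal E tau dE dtau lam (Mtau + / lam ^ m * (Rc - Mtau)) n
          * Ncal E tau dE dtau lam Rc m
     /\ Ncal E tau dE dtau lam (Mtau + / lam ^ m * (Rc - Mtau)) n
          * Ncal E tau dE dtau lam Rc m
        <= Ncal E tau dE dtau lam Rc n * Ncal E tau dE dtau lam Rc m)
  /\
  exists L : R,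
    Un_cv (fun k => Rpower (Ncal E tau dE dtau lam Rc (S k)) (/ INR (S k))) L
    /\ is_glb (fun y => exists k : nat,
                 y = Rpower (Ncal E tau dE dtau lam Rc (S k)) (/ INR (S k))) L
    /\ (forall Rc' : R, Mtau < Rc' ->
          Un_cv (fun k => Rpower (Ncal E tau dE dtau lam Rc' (S k)) (/ INR (S k))) L).
Proof.
  assert (HdtauM : forall x, Rabs (dtau x) <= Mtau)
    by (intro x; apply HMtau; exists x; reflexivity).
  assert (HdE_low : forall x, lam <= dE x) by (intro x; apply HdE_bnd).
  split.
  - intros n m _ _. split; [eapply Ncal_submul; eauto; lra|].
    apply Rmult_le_compat_r.
    + enough (1 <= Ncal E tau dE dtau lam Rc m) by lra. eapply Ncal_ge1; eauto; lra.
    + eapply Ncal_mono; eauto. apply contracted_radius_le; lra.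
  - destruct (ln_Ncal_fekete ell E dE tau dtau lam Mtau) with (Rc := Rc)
      as [L [Hlow Hcv]]; auto; [lra|].
    exists (exp L). split; [|split].
    + apply Rpower_root_cv, Hcv.
    + apply Rpower_root_glb; assumption.
    + intros Rc' HRc'.
      destruct (ln_Ncal_fekete ell E dE tau dtau lam Mtau) with (Rc := Rc')
        as [L' [Hlow' Hcv']]; auto; [lra|].
      replace L with L'; [apply Rpower_root_cv, Hcv'|].
      apply Rle_antisym;
        [eapply ln_Ncal_rate_le with (R1 := Rc) | eapply ln_Ncal_rate_le with (R1 := Rc')];
        eauto; lra.
Qed.
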